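(* For every $z\in\mathbb R$ there is a constant $C_z$ depending only on $z$ such that for all integers $q\ge1$ $$\left|\sum_{u=0}^{q}\sum_{k=0}^{u}\frac{\alpha_{k,u-k}}{k!(u-k)!}\frac{\beta_{q-u}(z)}{(q-u)!}\right|\le C_z\,2^{q}\frac{1}{\sqrt{(q-1)!}}.$$
   Context: $H_n$ are the probabilists' Hermite polynomials, $\phi$ the standard Gaussian density, $\beta_\ell(z):=\phi(z)H_\ell(z)$. For nonnegative integers $n,m$, $\alpha_{2n,2m}=\sqrt{\frac\pi2}\frac{(2n)!(2m)!}{n!m!}\frac{1}{2^{n+m}}\sum_{i=0}^{n+m}(-1)^{i+n+m}\binom{n+m}{i}\frac{(2i+1)!}{(i!)^2}\frac1{4^i}$, and $\alpha_{k,l}=0$ unless $k$ and $l$ are both even. *)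

From Stdlib Require Import Reals Lra Lia Factorial.
Open Scope R_scope.

(* Probabilists' Hermite polynomials:
   He_0 = 1, He_1 = x, He_{n+2} = x He_{n+1} - (n+1) He_n. *)
Fixpoint hermite_pair (n : nat) (x : R) : R * R :=
  match n with
  | O => (1, x)
  | S m => let (a, b) := hermite_pair m x in (b, x * b - INR (S m) * a)
  end.

Definition hermiteH (n : nat) (x : R) : R := fst (hermite_pair n x).

Definition phi (z : R) : R := exp (- z ^ 2 / 2) / sqrt (2 * PI).

Definition beta (l : nat) (z : R) : R := phi z * hermiteH l z.

(* alpha_{2n,2m} *)
Definition alpha_even (n m : nat) : R :=
  sqrt (PI / 2) * (INR (fact (2 * n)) * INR (fact (2 * m))
                   / (INR (fact n) * INR (fact m))) / 2 ^ (n + m)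
  * sum_f_R0 (fun i => (-1) ^ (i + n + m) * C (n + m) i
                        * INR (fact (2 * i + 1)) / (INR (fact i)) ^ 2 / 4 ^ i)
             (n + m).

Definition alpha (k l : nat) : R :=
  if andb (Nat.even k) (Nat.even l) then alpha_even (Nat.div2 k) (Nat.div2 l) else 0.

From Stdlib Require Import Reals Factorial Lra Lia.
Open Scope R_scope.

(* The proof bounds every one of the (q+1)(q+2)/2 terms separately.
   1. The alternating sum in alpha_{2n,2m} is the (n+m)-th forward difference of
      i |-> binom(i+1/2, i), which equals binom(1/2, n+m); hence it
      has modulus at most 1, and with (2n)! <= 4^n (n!)^2 this gives
      (alpha_{k,l}/(k! l!))^2 <= (pi/2)/(k! l!).
   2. From the three-term recurrence, He_n(z)^2 <= K_z (3/2)^n n!, because the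
      normalized squares stop growing once n >= 12 z^2.
   3. Since binom(u,k) <= 2^u and sum_u binom(q,u) 2^u (3/2)^(q-u) = (7/2)^q,
      each term squared is at most E_z (7/2)^q / q!.
   4. Summing over the O(q^2) terms and using that (q+1)^4 (7/8)^q is bounded
      turns sqrt((7/2)^q/q!) (q+1)^2 into the claimed C_z 2^q / sqrt((q-1)!). *)

Lemma Rdiv_le_iff (a b c : R) : 0 < c -> (a / c <= b <-> a <= b * c).
Proof.
  intros Hc. assert (Hcancel : a / c * c = a) by (field; lra). split; intros H.
  - apply (Rmult_le_compat_r c) in H; lra.
  - apply (Rmult_le_reg_r c); lra.
Qed.

Lemma sum_term_le (f : nat -> R) (N k : nat) :
  (forall i, 0 <= f i) -> (k <= N)%nat -> f k <= sum_f_R0 f N.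
Proof.
  intros Hf Hk. induction N as [|N IH].
  - replace k with 0%nat by lia. simpl. lra.
  - rewrite tech5. destruct (Nat.eq_dec k (S N)) as [->|Hne].
    + assert (0 <= sum_f_R0 f N) by (apply cond_pos_sum; auto). lra.
    + assert (f k <= sum_f_R0 f N) by (apply IH; lia). specialize (Hf (S N)). lra.
Qed.

Lemma eventually_nonincreasing_bounded (f : nat -> R) (n0 : nat) :
  (forall n, (n0 <= n)%nat -> f (S n) <= f n) -> exists M, forall n, f n <= M.
Proof.
  intros Hdec. exists (sum_f_R0 (fun i => Rabs (f i)) n0). intros n.
  assert (Hinit : forall k, (k <= n0)%nat -> f k <= sum_f_R0 (fun i => Rabs (f i)) n0).
  { intros k Hk. apply Rle_trans with (Rabs (f k)); [apply Rle_abs|].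
    apply (sum_term_le (fun i => Rabs (f i))); auto using Rabs_pos. }
  destruct (Nat.le_gt_cases n n0) as [Hn|Hn]; [now apply Hinit|].
  assert (Htail : forall d, f (n0 + d)%nat <= f n0).
  { induction d as [|d IH]; [rewrite Nat.add_0_r; lra|].
    rewrite Nat.add_succ_r.
    apply Rle_trans with (f (n0 + d)%nat); [apply Hdec; lia | exact IH]. }
  replace n with (n0 + (n - n0))%nat by lia.
  eapply Rle_trans; [apply Htail | apply Hinit; lia].
Qed.

Lemma C_nonneg (n i : nat) : 0 <= C n i.
Proof.
  unfold C. apply Rle_mult_inv_pos; [apply pos_INR|].
  apply Rmult_lt_0_compat; apply INR_fact_lt_0.
Qed.

Lemma C_n_0 (n : nat) : C n 0 = 1.
Proof. unfold C. rewrite Nat.sub_0_r. simpl. field. apply INR_fact_neq_0. Qed.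

Lemma C_n_n (n : nat) : C n n = 1.
Proof. unfold C. rewrite Nat.sub_diag. simpl. field. apply INR_fact_neq_0. Qed.

Definition fdiff (N : nat) (g : nat -> R) : R :=
  sum_f_R0 (fun i => (-1) ^ (i + N) * C N i * g i) N.

Lemma pow_m1_succ (n : nat) : (-1) ^ S n = - (-1) ^ n.
Proof. simpl; ring. Qed.

Lemma pow_m1_double (n : nat) : (-1) ^ (n + n) = 1.
Proof. replace (n + n)%nat with (2 * n)%nat by lia. apply pow_1_even. Qed.

Lemma fdiff_ext (N : nat) (g h : nat -> R) : (forall i, g i = h i) -> fdiff N g = fdiff N h.
Proof. intros H. unfold fdiff. apply sum_eq. intros i _. now rewrite H. Qed.

(* The recursion defining iterated differences, D^(N+1) g = D^N (g o S) - D^N g;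
   it amounts to Pascal's rule for the binomial coefficients. *)
Lemma fdiff_succ (N : nat) (g : nat -> R) :
  fdiff (S N) g = fdiff N (fun i => g (S i)) - fdiff N g.
Proof.
  unfold fdiff. destruct N as [|M].
  - simpl. rewrite !C_n_0. unfold C. simpl. field.
  - rewrite (decomp_sum _ (S (S M))) by lia. simpl Nat.pred. rewrite tech5.
    rewrite (sum_eq _ (fun i => (-1) ^ (i + S M) * C (S M) i * g (S i)
                              - (-1) ^ (S i + S M) * C (S M) (S i) * g (S i))).
    2:{ intros i Hi. rewrite <- pascal by lia.
        replace (S i + S (S M))%nat with (S (S (i + S M))) by lia.
        replace (S i + S M)%nat with (S (i + S M)) by lia.
        rewrite !pow_m1_succ. ring. }
    rewrite minus_sum, tech5.
    rewrite (decomp_sum (fun i => (-1) ^ (i + S M) * C (S M) i * g i) (S M)) by lia.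
    simpl Nat.pred. rewrite !pow_m1_double, !C_n_0, !C_n_n.
    simpl (0 + _)%nat. rewrite (pow_m1_succ (S M)). ring.
Qed.

(* rising_half j = (3/2)(5/2)...(j+1/2), so rising_half j / j! = binom(j+1/2, j). *)
Fixpoint rising_half (j : nat) : R :=
  match j with O => 1 | S j' => rising_half j' * (INR j' + 3 / 2) end.

(* falling_half N = (1/2)(1/2-1)...(1/2-N+1), so falling_half N / N! = binom(1/2, N). *)
Fixpoint falling_half (N : nat) : R :=
  match N with O => 1 | S N' => falling_half N' * (1 / 2 - INR N') end.

(* Closed form of the N-th forward difference of j |-> binom(j+1/2, j). *)
Definition half_diff (N j : nat) : R :=
  rising_half j * falling_half N / INR (fact (j + N)).

Lemma half_diff_step (N j : nat) :
  half_diff N (S j) - half_diff N j = half_diff (S N) j.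
Proof.
  unfold half_diff. simpl rising_half. simpl falling_half.
  replace (S j + N)%nat with (S (j + N)) by lia.
  replace (j + S N)%nat with (S (j + N)) by lia.
  rewrite fact_simpl, mult_INR, S_INR, plus_INR.
  assert (Hf := INR_fact_neq_0 (j + N)).
  assert (0 <= INR j) by apply pos_INR. assert (0 <= INR N) by apply pos_INR.
  field. split; auto. lra.
Qed.

Lemma fdiff_half_diff (N : nat) : forall j,
  fdiff N (fun i => half_diff 0 (j + i)) = half_diff N j.
Proof.
  induction N as [|N IH]; intros j.
  - unfold fdiff. simpl. rewrite C_n_0, Nat.add_0_r. ring.
  - rewrite fdiff_succ, (fdiff_ext N _ (fun i => half_diff 0 (S j + i))).
    + rewrite !IH. apply half_diff_step.
    + intros i. f_equal. lia.
Qed.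

Lemma falling_half_bound (N : nat) : Rabs (falling_half N) <= INR (fact N).
Proof.
  induction N as [|N IH]; simpl falling_half.
  - simpl. rewrite Rabs_R1. lra.
  - rewrite Rabs_mult, fact_simpl, mult_INR, S_INR, Rmult_comm.
    assert (0 <= INR N) by apply pos_INR.
    assert (Rabs (1 / 2 - INR N) <= INR N + 1) by (apply Rabs_le; lra).
    apply Rmult_le_compat; auto using Rabs_pos.
Qed.

(* (2i+1)! = (3/2)(5/2)...(i+1/2) i! 4^i, i.e. (2i+1)!/(i!^2 4^i) = binom(i+1/2, i). *)
Lemma fact_odd_rising_half (i : nat) :
  INR (fact (2 * i + 1)) = rising_half i * INR (fact i) * 4 ^ i.
Proof.
  induction i as [|i IH]; [simpl; lra|].
  replace (2 * S i + 1)%nat with (S (S (2 * i + 1))) by lia.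
  rewrite !fact_simpl, !mult_INR, IH. simpl rising_half.
  rewrite !S_INR, plus_INR, mult_INR. simpl (INR 2). simpl (4 ^ S i).
  change (INR 1) with 1. field.
Qed.

(* The alternating sum inside alpha_{2n,2m} is the N-th forward difference of
   i |-> binom(i+1/2, i), i.e. binom(1/2, N); hence it is at most 1 in modulus. *)
Lemma alternating_central_sum_bound (N : nat) :
  Rabs (sum_f_R0 (fun i => (-1) ^ (i + N) * C N i
                   * INR (fact (2 * i + 1)) / INR (fact i) ^ 2 / 4 ^ i) N) <= 1.
Proof.
  assert (Hsum : sum_f_R0 (fun i => (-1) ^ (i + N) * C N i
                   * INR (fact (2 * i + 1)) / INR (fact i) ^ 2 / 4 ^ i) N
                 = fdiff N (fun i => half_diff 0 (0 + i))).
  { apply sum_eq. intros i _. unfold half_diff. simpl (0 + i)%nat. rewrite Nat.add_0_r.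
    rewrite fact_odd_rising_half. simpl falling_half.
    assert (Hf := INR_fact_neq_0 i). assert (0 < 4 ^ i) by (apply pow_lt; lra).
    field. split; lra. }
  rewrite Hsum, fdiff_half_diff. unfold half_diff. simpl rising_half. simpl (0 + N)%nat.
  assert (Hfact := INR_fact_lt_0 N). assert (Hfall := falling_half_bound N).
  unfold Rdiv. rewrite Rmult_1_l, Rabs_mult, Rabs_inv, (Rabs_pos_eq (INR _)) by lra.
  apply Rdiv_le_iff; lra.
Qed.

Lemma fact_double_le (n : nat) : INR (fact (2 * n)) <= 4 ^ n * INR (fact n) ^ 2.
Proof.
  induction n as [|n IH]; [simpl; lra|].
  replace (2 * S n)%nat with (S (S (2 * n))) by lia.
  rewrite !fact_simpl, !mult_INR, !S_INR, mult_INR. simpl (INR 2).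
  assert (0 <= INR n) by apply pos_INR. assert (0 <= INR (fact (2 * n))) by apply pos_INR.
  replace (4 ^ S n * ((INR n + 1) * INR (fact n)) ^ 2)
    with ((4 * (INR n + 1) ^ 2) * (4 ^ n * INR (fact n) ^ 2)) by (simpl; ring).
  rewrite <- Rmult_assoc. apply Rmult_le_compat; nra.
Qed.

Lemma even_double (k : nat) : Nat.even k = true -> k = (2 * Nat.div2 k)%nat.
Proof.
  intros H. rewrite (Nat.div2_odd k) at 1. rewrite <- Nat.negb_even, H. simpl. lia.
Qed.

(* Each normalized coefficient satisfies (alpha_{k,l} / (k! l!))^2 <= (pi/2) / (k! l!):
   the alternating sum is at most 1 and (2n)! (2m)! <= (n! m! 2^(n+m))^2. *)
Lemma alpha_term_bound (k l : nat) :
  (alpha k l / (INR (fact k) * INR (fact l)))² <= (PI / 2) / (INR (fact k) * INR (fact l)).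
Proof.
  assert (Hkl : 0 < INR (fact k) * INR (fact l))
    by (apply Rmult_lt_0_compat; apply INR_fact_lt_0).
  assert (HP := PI_RGT_0).
  unfold alpha.
  destruct (Nat.even k) eqn:Ek; destruct (Nat.even l) eqn:El; simpl andb; cbv iota;
    try (unfold Rdiv at 1; rewrite Rmult_0_l, Rsqr_0;
         apply Rlt_le, Rdiv_lt_0_compat; lra).
  apply even_double in Ek, El.
  set (n := Nat.div2 k) in *. set (m := Nat.div2 l) in *.
  set (s := sum_f_R0 (fun i => (-1) ^ (i + n + m) * C (n + m) i
                        * INR (fact (2 * i + 1)) / (INR (fact i)) ^ 2 / 4 ^ i) (n + m)).
  assert (Hs : s² <= 1).
  { assert (Habs : Rabs s <= 1).
    { unfold s. erewrite sum_eq; [apply (alternating_central_sum_bound (n + m))|].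
      intros i _. cbv beta. now rewrite Nat.add_assoc. }
    rewrite Rsqr_abs. assert (0 <= Rabs s) by apply Rabs_pos. unfold Rsqr. nra. }
  set (den := INR (fact n) * INR (fact m) * 2 ^ (n + m)).
  assert (Hden : 0 < den).
  { unfold den. repeat apply Rmult_lt_0_compat; auto using INR_fact_lt_0.
    apply pow_lt; lra. }
  assert (Hval : alpha_even n m / (INR (fact k) * INR (fact l)) = sqrt (PI / 2) * s / den).
  { unfold alpha_even, den. fold s. rewrite <- Ek, <- El. field.
    repeat split; auto using INR_fact_neq_0. apply pow_nonzero; lra. }
  assert (Hfact : INR (fact k) * INR (fact l) <= den²).
  { replace (den²) with ((4 ^ n * INR (fact n) ^ 2) * (4 ^ m * INR (fact m) ^ 2)).
    - rewrite Ek, El. apply Rmult_le_compat; auto using pos_INR, fact_double_le.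
    - unfold den, Rsqr. rewrite pow_add. replace 4 with (2 * 2) by ring.
      rewrite !Rpow_mult_distr. ring. }
  rewrite Hval, Rsqr_div', Rsqr_mult, Rsqr_sqrt by lra.
  apply Rle_trans with ((PI / 2) / den²).
  - unfold Rdiv. apply Rmult_le_compat_r.
    + apply Rlt_le, Rinv_0_lt_compat. unfold Rsqr. nra.
    + rewrite <- (Rmult_1_r (PI * / 2)) at 2. apply Rmult_le_compat_l; lra.
  - unfold Rdiv. apply Rmult_le_compat_l; [lra|]. apply Rinv_le_contravar; auto.
Qed.

Lemma hermiteH_rec (n : nat) (x : R) :
  hermiteH (S (S n)) x = x * hermiteH (S n) x - INR (S n) * hermiteH n x.
Proof.
  unfold hermiteH. simpl hermite_pair.
  assert (Hsnd : snd (hermite_pair n x) = fst (hermite_pair (S n) x))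
    by (simpl; now destruct (hermite_pair n x)).
  destruct (hermite_pair n x) as [a b]. simpl in *. now rewrite Hsnd.
Qed.

Definition hermite_ratio (z : R) (n : nat) : R :=
  hermiteH n z ^ 2 / ((3 / 2) ^ n * INR (fact n)).

Lemma hermite_weight_pos (n : nat) : 0 < (3 / 2) ^ n * INR (fact n).
Proof. apply Rmult_lt_0_compat; [apply pow_lt; lra | apply INR_fact_lt_0]. Qed.

Lemma hermite_ratio_step (z : R) (n : nat) : 12 * z ^ 2 <= INR n ->
  hermite_ratio z (S (S n)) <= Rmax (hermite_ratio z n) (hermite_ratio z (S n)).
Proof.
  intros Hn. set (M := Rmax (hermite_ratio z n) (hermite_ratio z (S n))).
  assert (Ha := hermite_weight_pos n).
  set (a := (3 / 2) ^ n * INR (fact n)) in *.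
  assert (Hnn : 0 <= INR n) by apply pos_INR.
  assert (Ea1 : (3 / 2) ^ S n * INR (fact (S n)) = a * (3 / 2) * (INR n + 1)).
  { unfold a. rewrite fact_simpl, mult_INR, S_INR. simpl. ring. }
  assert (Ea2 : (3 / 2) ^ S (S n) * INR (fact (S (S n)))
                = a * (3 / 2) ^ 2 * (INR n + 1) * (INR n + 2)).
  { unfold a. rewrite !fact_simpl, !mult_INR, !S_INR. simpl. ring. }
  set (h0 := hermiteH n z). set (h1 := hermiteH (S n) z).
  assert (H0 : h0 ^ 2 <= M * a).
  { apply Rdiv_le_iff; auto. apply Rmax_l. }
  assert (H1 : h1 ^ 2 <= M * (a * (3 / 2) * (INR n + 1))).
  { apply Rdiv_le_iff; [nra|]. rewrite <- Ea1. apply Rmax_r. }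
  assert (HM : 0 <= M).
  { apply Rle_trans with (hermite_ratio z n); [|apply Rmax_l].
    apply Rle_mult_inv_pos; [apply pow2_ge_0 | exact Ha]. }
  unfold hermite_ratio at 1. rewrite Ea2, hermiteH_rec, S_INR. fold h0 h1.
  apply Rdiv_le_iff; [nra|].
  assert (Hsq : (z * h1 - (INR n + 1) * h0) ^ 2
                <= 2 * z ^ 2 * h1 ^ 2 + 2 * (INR n + 1) ^ 2 * h0 ^ 2).
  { assert (0 <= (z * h1 + (INR n + 1) * h0) ^ 2) by apply pow2_ge_0. nra. }
  assert (Hz : 0 <= z ^ 2) by apply pow2_ge_0.
  assert (T1 : 2 * z ^ 2 * h1 ^ 2 <= 2 * z ^ 2 * (M * (a * (3 / 2) * (INR n + 1))))
    by (apply Rmult_le_compat_l; nra).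
  assert (T2 : 2 * (INR n + 1) ^ 2 * h0 ^ 2 <= 2 * (INR n + 1) ^ 2 * (M * a))
    by (apply Rmult_le_compat_l; nra).
  assert (Ma : 0 <= M * a * (INR n + 1)) by (apply Rmult_le_pos; nra).
  assert (Key : M * a * (INR n + 1) * (3 * z ^ 2 + 2 * (INR n + 1))
                <= M * a * (INR n + 1) * ((3 / 2) ^ 2 * (INR n + 2)))
    by (apply Rmult_le_compat_l; lra).
  nra.
Qed.

Lemma hermite_growth (z : R) :
  exists K, 0 <= K /\ forall n, hermiteH n z ^ 2 <= K * (3 / 2) ^ n * INR (fact n).
Proof.
  destruct (INR_unbounded (12 * z ^ 2)) as [n0 Hn0].
  destruct (eventually_nonincreasing_bounded
              (fun n => Rmax (hermite_ratio z n) (hermite_ratio z (S n))) n0) as [M HM].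
  { intros n Hn. apply Rmax_lub; [apply Rmax_r|]. apply hermite_ratio_step.
    apply le_INR in Hn. lra. }
  assert (Hbound : forall n, hermiteH n z ^ 2 <= M * (3 / 2) ^ n * INR (fact n)).
  { intros n. rewrite Rmult_assoc. apply Rdiv_le_iff; [apply hermite_weight_pos|].
    eapply Rle_trans; [apply Rmax_l | apply HM]. }
  exists M. split; [|exact Hbound].
  specialize (Hbound 0%nat). unfold hermiteH in Hbound. simpl in Hbound. lra.
Qed.

Lemma binomial_term_le (x y : R) (n i : nat) : 0 <= x -> 0 <= y -> (i <= n)%nat ->
  C n i * x ^ i * y ^ (n - i) <= (x + y) ^ n.
Proof.
  intros Hx Hy Hi. rewrite binomial.
  apply (sum_term_le (fun j => C n j * x ^ j * y ^ (n - j))); auto.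
  intros j. apply Rmult_le_pos; [apply Rmult_le_pos|]; auto using C_nonneg, pow_le.
Qed.

(* The multinomial weight of the term (k, u-k, q-u) is at most (7/2)^q / q!:
   binom(u,k) <= 2^u and sum_u binom(q,u) 2^u (3/2)^(q-u) = (7/2)^q. *)
Lemma multinomial_weight_bound (q u k : nat) : (k <= u)%nat -> (u <= q)%nat ->
  (3 / 2) ^ (q - u) / (INR (fact k) * INR (fact (u - k)) * INR (fact (q - u)))
  <= (7 / 2) ^ q / INR (fact q).
Proof.
  intros Hk Hu.
  assert (Hku : C u k <= 2 ^ u).
  { replace 2 with (1 + 1) by ring.
    assert (H := binomial_term_le 1 1 u k). rewrite !pow1, !Rmult_1_r in H.
    apply H; [lra | lra | exact Hk]. }
  assert (Hqu : C q u * 2 ^ u * (3 / 2) ^ (q - u) <= (7 / 2) ^ q).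
  { replace (7 / 2) with (2 + 3 / 2) by field.
    apply binomial_term_le; [lra | lra | exact Hu]. }
  assert (Hw : (3 / 2) ^ (q - u) / (INR (fact k) * INR (fact (u - k)) * INR (fact (q - u)))
               = C u k * C q u * (3 / 2) ^ (q - u) / INR (fact q)).
  { unfold C. assert (A1 := INR_fact_neq_0 k). assert (A2 := INR_fact_neq_0 (u - k)).
    assert (A3 := INR_fact_neq_0 (q - u)). assert (A4 := INR_fact_neq_0 u).
    assert (A5 := INR_fact_neq_0 q). field. tauto. }
  rewrite Hw. unfold Rdiv. apply Rmult_le_compat_r.
  { apply Rlt_le, Rinv_0_lt_compat, INR_fact_lt_0. }
  assert (0 <= C q u * (3 / 2) ^ (q - u))
    by (apply Rmult_le_pos; [apply C_nonneg | apply pow_le; lra]).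
  apply Rle_trans with (2 ^ u * C q u * (3 / 2) ^ (q - u)); [|lra].
  rewrite !Rmult_assoc. apply Rmult_le_compat_r; auto.
Qed.

Lemma term_sq_bound (z K : R) (q u k : nat) : 0 <= K ->
  (forall n, hermiteH n z ^ 2 <= K * (3 / 2) ^ n * INR (fact n)) ->
  (k <= u)%nat -> (u <= q)%nat ->
  (alpha k (u - k) / (INR (fact k) * INR (fact (u - k)))
   * (beta (q - u) z / INR (fact (q - u))))²
  <= (PI / 2) * phi z ^ 2 * K * ((7 / 2) ^ q / INR (fact q)).
Proof.
  intros K0 HK Hk Hu.
  set (n := (q - u)%nat). assert (Hn := INR_fact_lt_0 n).
  assert (Hphi : 0 <= phi z ^ 2) by apply pow2_ge_0.
  assert (Hbeta : (beta n z / INR (fact n))² <= phi z ^ 2 * K * ((3 / 2) ^ n / INR (fact n))).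
  { unfold beta. rewrite Rsqr_div', Rsqr_mult. apply Rdiv_le_iff; [unfold Rsqr; nra|].
    replace (phi z ^ 2 * K * ((3 / 2) ^ n / INR (fact n)) * (INR (fact n))²)
      with (phi z ^ 2 * (K * (3 / 2) ^ n * INR (fact n))) by (unfold Rsqr; field; lra).
    rewrite !Rsqr_pow2. apply Rmult_le_compat_l; auto. }
  assert (Halpha := alpha_term_bound k (u - k)).
  assert (Hk1 := INR_fact_lt_0 k). assert (Hk2 := INR_fact_lt_0 (u - k)).
  assert (HP := PI_RGT_0).
  assert (Hw := multinomial_weight_bound q u k Hk Hu). fold n in Hw.
  rewrite Rsqr_mult.
  apply Rle_trans with ((PI / 2) / (INR (fact k) * INR (fact (u - k)))
                        * (phi z ^ 2 * K * ((3 / 2) ^ n / INR (fact n)))).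
  { apply Rmult_le_compat; auto; apply Rle_0_sqr. }
  replace ((PI / 2) / (INR (fact k) * INR (fact (u - k)))
           * (phi z ^ 2 * K * ((3 / 2) ^ n / INR (fact n))))
    with ((PI / 2) * phi z ^ 2 * K
          * ((3 / 2) ^ n / (INR (fact k) * INR (fact (u - k)) * INR (fact n))))
    by (field; lra).
  apply Rmult_le_compat_l; auto. apply Rmult_le_pos; [apply Rmult_le_pos|]; lra.
Qed.

Lemma poly_geometric_bounded : exists D, forall n, (INR n + 1) ^ 4 * (7 / 8) ^ n <= D.
Proof.
  apply (eventually_nonincreasing_bounded _ 40). intros n Hn.
  apply le_INR in Hn. replace (INR 40) with 40 in Hn by (simpl; ring).
  rewrite S_INR. change ((7 / 8) ^ S n) with (7 / 8 * (7 / 8) ^ n).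
  assert (0 < (7 / 8) ^ n) by (apply pow_lt; lra).
  set (y := INR n + 1) in *.
  assert (Hratio : (y + 1) ^ 4 * (7 / 8) <= y ^ 4).
  { assert (y >= 41) by (unfold y; lra).
    assert (y ^ 3 >= 0) by (apply Rle_ge, pow_le; lra).
    assert (y ^ 4 >= 41 * y ^ 3) by (replace (y ^ 4) with (y * y ^ 3) by ring; nra).
    assert (13 * y ^ 3 >= 42 * y ^ 2 + 28 * y + 7) by nra.
    replace ((y + 1) ^ 4) with (y ^ 4 + 4 * y ^ 3 + 6 * y ^ 2 + 4 * y + 1) by ring. lra. }
  replace ((y + 1) ^ 4 * (7 / 8 * (7 / 8) ^ n)) with ((y + 1) ^ 4 * (7 / 8) * (7 / 8) ^ n)
    by ring.
  apply Rmult_le_compat_r; lra.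
Qed.

Lemma triangular_sum_bound (t : nat -> nat -> R) (B : R) (q : nat) :
  (forall u k, (k <= u)%nat -> (u <= q)%nat -> Rabs (t u k) <= B) ->
  Rabs (sum_f_R0 (fun u => sum_f_R0 (t u) u) q) <= B * INR (S q) * INR (S q).
Proof.
  intros Ht. eapply Rle_trans; [apply Rsum_abs|].
  rewrite <- sum_cte. apply sum_Rle. intros u Hu.
  eapply Rle_trans; [apply Rsum_abs|].
  eapply Rle_trans; [apply (sum_Rle _ (fun _ => B)); intros k Hk; apply Ht; auto|].
  assert (HB : 0 <= B) by (eapply Rle_trans; [apply Rabs_pos | apply (Ht 0 0)%nat; lia]).
  rewrite sum_cte. apply Rmult_le_compat_l; auto. apply le_INR. lia.
Qed.

Lemma final_comparison (E D : R) (q : nat) :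
  0 <= E -> (INR q + 1) ^ 4 * (7 / 8) ^ q <= D -> (1 <= q)%nat ->
  sqrt (E * ((7 / 2) ^ q / INR (fact q))) * INR (S q) * INR (S q)
  <= sqrt (E * D) * 2 ^ q * (1 / sqrt (INR (fact (q - 1)))).
Proof.
  intros HE HD Hq.
  assert (Fq := INR_fact_lt_0 q).
  assert (Hqpos : 0 <= INR q) by apply pos_INR.
  assert (D0 : 0 <= D)
    by (eapply Rle_trans; [|exact HD]; apply Rmult_le_pos; apply pow_le; lra).
  set (F1 := INR (fact (q - 1))).
  assert (HF1 : 0 < F1) by apply INR_fact_lt_0.
  assert (HFq : F1 <= INR (fact q)).
  { unfold F1. apply le_INR. destruct q as [|p]; [lia|].
    simpl (S p - 1)%nat. rewrite Nat.sub_0_r. simpl. lia. }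
  assert (Hrhs : 0 <= sqrt (E * D) * 2 ^ q * (1 / sqrt F1)).
  { apply Rmult_le_pos; [apply Rmult_le_pos; [apply sqrt_pos | apply pow_le; lra]|].
    apply Rlt_le, Rdiv_lt_0_compat; [lra | now apply sqrt_lt_R0]. }
  apply Rsqr_incr_0_var; auto.
  rewrite !Rsqr_mult, Rsqr_div', !Rsqr_sqrt by (try apply Rmult_le_pos; try lra;
    apply Rlt_le, Rdiv_lt_0_compat; auto; apply pow_lt; lra).
  replace (E * ((7 / 2) ^ q / INR (fact q)) * (INR (S q))² * (INR (S q))²)
    with (E * 4 ^ q / INR (fact q) * ((INR q + 1) ^ 4 * (7 / 8) ^ q))
    by (replace (7 / 2) with (4 * (7 / 8)) by field; rewrite Rpow_mult_distr, S_INR;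
        unfold Rsqr; field; lra).
  replace (E * D * (2 ^ q)² * (1² / F1)) with (E * 4 ^ q * D / F1)
    by (unfold Rsqr; rewrite <- Rpow_mult_distr; replace (2 * 2) with 4 by ring;
        field; lra).
  assert (H4 : 0 <= E * 4 ^ q) by (apply Rmult_le_pos; auto; apply pow_le; lra).
  apply Rle_trans with (E * 4 ^ q * D / INR (fact q)).
  - unfold Rdiv. rewrite (Rmult_comm (E * 4 ^ q * D)), (Rmult_comm (E * 4 ^ q)).
    rewrite !Rmult_assoc. apply Rmult_le_compat_l; [apply Rlt_le, Rinv_0_lt_compat; lra|].
    apply Rmult_le_compat_l; [lra|]. apply Rmult_le_compat_l; [apply pow_le; lra | exact HD].
  - unfold Rdiv. apply Rmult_le_compat_l; [apply Rmult_le_pos; auto|].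
    apply Rinv_le_contravar; auto.
Qed.

Theorem mainTheorem12 :
  forall z : R, exists Cz : R,
    forall q : nat, (1 <= q)%nat ->
      Rabs (sum_f_R0 (fun u =>
              sum_f_R0 (fun k =>
                 alpha k (u - k) / (INR (fact k) * INR (fact (u - k)))
                 * (beta (q - u) z / INR (fact (q - u)))) u) q)
      <= Cz * 2 ^ q * (1 / sqrt (INR (fact (q - 1)))).
Proof.
  intros z.
  destruct (hermite_growth z) as [K [HK0 HK]].
  destruct poly_geometric_bounded as [D HD].
  set (E := (PI / 2) * phi z ^ 2 * K).
  assert (HE : 0 <= E).
  { assert (0 <= phi z ^ 2) by apply pow2_ge_0. assert (HP := PI_RGT_0).
    unfold E. apply Rmult_le_pos; [apply Rmult_le_pos|]; lra. }
  exists (sqrt (E * D)). intros q Hq.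
  eapply Rle_trans; [apply triangular_sum_bound | exact (final_comparison E D q HE (HD q) Hq)].
  intros u k Hk Hu. rewrite <- sqrt_Rsqr_abs. apply sqrt_le_1_alt.
  now apply term_sq_bound.
Qed.
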